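(* Let $P(\lambda)=\begin{bmatrix} A(\lambda) & B(\lambda)\\ -C(\lambda) & D(\lambda)\end{bmatrix}$ be a polynomial system matrix of a rational matrix $G(\lambda)$, where $A(\lambda)$ and $C(\lambda)$ are right coprime. Let $H_2(\lambda)$ be a right polynomial basis of $G(\lambda)$ and $H_1(\lambda)=-A(\lambda)^{-1}B(\lambda)H_2(\lambda)$. Then $H_1(\lambda)$ is polynomial and $\begin{bmatrix}H_1(\lambda)\\H_2(\lambda)\end{bmatrix}$ is a right polynomial basis of $P(\lambda)$.
   Context: $\mathbb F$ is an arbitrary field. A polynomial system matrix of $G(\lambda)\in\mathbb F(\lambda)^{p\times m}$ is $P(\lambda)=\begin{bmatrix} A(\lambda) & B(\lambda)\\ -C(\lambda) & D(\lambda)\end{bmatrix}$ with $A\in\mathbb F[\lambda]^{n\times n}$ regular, $B,C,D$ polynomial of compatible sizes, and $G=D+CA^{-1}B$. $A\in\mathbb F[\lambda]^{n\times n}$ and $C\in\mathbb F[\lambda]^{p\times n}$ are right coprime if all their common right divisors are unimodular (equivalently, there exist polynomial $X,Y$ with $XA+YC=I_n$). A right polynomial basis of a rational matrix $G$ is a polynomial matrix whose columns form a basis of $\mathcal N_r(G)=\{x\in\mathbb F(\lambda)^m: Gx=0\}$. *)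

From HB Require Import structures.
From mathcomp Require Import all_boot all_order all_algebra.
From mathcomp Require Import fraction.
Set Implicit Arguments. Unset Strict Implicit. Unset Printing Implicit Defensive.
Import GRing.Theory.
Local Open Scope ring_scope.

Notation ratf F := {fraction {poly F}}.

Definition pmx {F : fieldType} {m n : nat} (M : 'M[{poly F}]_(m, n))
  : 'M[ratf F]_(m, n) := map_mx (@FracField.tofrac _) M.

Definition unimodular {F : fieldType} {n : nat} (U : 'M[{poly F}]_n) : bool :=
  U \in unitmx.

Definition right_coprime {F : fieldType} {n p : nat}
  (A : 'M[{poly F}]_n) (C : 'M[{poly F}]_(p, n)) : Prop :=
  forall (R A' : 'M[{poly F}]_n) (C' : 'M[{poly F}]_(p, n)),
    A = A' *m R -> C = C' *m R -> unimodular R.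

(* H (m x k polynomial) is a right polynomial basis of the rational matrix
   G (q x m): its k columns form a basis of the right null space
   N_r(G) = {x in F(lambda)^m | G x = 0}: they lie in N_r(G), are linearly
   independent over F(lambda), and span N_r(G). *)
Definition right_poly_basis {F : fieldType} {q m k : nat}
  (G : 'M[ratf F]_(q, m)) (H : 'M[{poly F}]_(m, k)) : Prop :=
  [/\ G *m pmx H = 0,
      \rank (pmx H) = k &
      forall x : 'cV[ratf F]_m, G *m x = 0 -> (x^T <= (pmx H)^T)%MS].

From HB Require Import structures.
From mathcomp Require Import all_boot all_order all_algebra.
From mathcomp Require Import fraction generic_quotient.
From Stdlib Require Import Classical.
Set Implicit Arguments. Unset Strict Implicit. Unset Printing Implicit Defensive.
Import GRing.Theory.
Local Open Scope ring_scope.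

(* Everything hinges on the polynomiality of H1: if A and C are right coprime,
   a rational vector y with A y and C y polynomial is polynomial.  Otherwise,
   clearing the denominators of y one irreducible factor r at a time, we reach
   a vector z with A z, C z, r z polynomial and some entry not polynomial; a
   Bezout relation then yields w with the same properties and w_i = 1 / r.
   The identity matrix with its i-th column replaced by w has a polynomial
   inverse R, and R is a common right divisor of A and C, so it is unimodular
   and its inverse, whose i-th diagonal entry is 1 / r, is polynomial, which
   is absurd.  The basis property is linear algebra over F(lambda): the kernel
   of the system matrix is the image of ker G under x2 |-> (- A^-1 B x2, x2). *)

Local Notation "x %:F" := (@FracField.tofrac _ x) (format "x %:F").

Lemma irreducible_factor (R : idomainType) (q : {poly R}) :
  (1 < size q)%N -> exists2 r : {poly R}, r %| q & irreducible_poly r.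
Proof.
elim: {q}(size q).+1 {-2}q (ltnSn (size q)) => [//|N IH] q ltqN gtq1.
have [irr_q|red_q] := classic (irreducible_poly q); first by exists q.
have [r [r_neq1 rq]] : exists r : {poly R}, [/\ size r != 1, r %| q & ~~ (r %= q)].
  apply: NNPP => no_r; apply: red_q; split=> // r r_neq1 rq.
  by apply/negPn/negP => nrq; apply: no_r; exists r.
rewrite -dvdp_size_eqp // => sz_rq.
have q_neq0 : q != 0 by rewrite -size_poly_gt0 ltnW.
have r_neq0 : r != 0 by apply: contraNneq q_neq0 => r0; move: rq; rewrite r0 dvd0p.
have ltrq : (size r < size q)%N by rewrite ltn_neqAle sz_rq dvdp_leq.
have gtr1 : (1 < size r)%N by rewrite ltn_neqAle eq_sym r_neq1 size_poly_gt0.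
have [s sr irr_s] := IH r (leq_trans ltrq ltqN) gtr1.
by exists s => //; apply: dvdp_trans rq.
Qed.

Lemma fraction_denom (R : idomainType) (x : {fraction R}) :
  exists2 b : R, b != 0 & exists a : R, x * b%:F = a%:F.
Proof.
elim/quotW: x => r; exists r.2; first exact: denom_ratioP.
exists r.1; rewrite /GRing.mul /= !piE; apply/eqP.
rewrite eqmodE /= FracField.equivfE /=.
by rewrite !numden_Ratio ?mulr1 ?oner_neq0 ?denom_ratioP // mulrC.
Qed.

(* [right_poly_basis G H] is convertible to [right_null_basis G (pmx H)]. *)
Definition right_null_basis (K : fieldType) (q m k : nat)
    (G : 'M[K]_(q, m)) (H : 'M[K]_(m, k)) : Prop :=
  [/\ G *m H = 0, \rank H = k &
      forall x : 'cV[K]_m, G *m x = 0 -> (x^T <= H^T)%MS].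

Section SystemMatrix.
Variables (K : fieldType) (n m p : nat).
Variables (A : 'M[K]_n) (B : 'M[K]_(n, m)) (C : 'M[K]_(p, n)) (D : 'M[K]_(p, m)).
Hypothesis unitA : A \in unitmx.

Let G : 'M[K]_(p, m) := D + C *m invmx A *m B.
Let T := col_mx (- (invmx A *m B)) (1%:M : 'M[K]_m).

Lemma mul_system_col_eq0 k (X1 : 'M[K]_(n, k)) (X2 : 'M[K]_(m, k)) :
  block_mx A B (- C) D *m col_mx X1 X2 = 0 <->
  X1 = - (invmx A *m B *m X2) /\ G *m X2 = 0.
Proof.
rewrite mul_block_col -col_mx0; split=> [/eq_col_mx[]|[-> GX2]].
  move=> /eqP; rewrite addr_eq0 => /eqP /(canRL (mulKmx unitA)) eX1 eX2.
  split; first by rewrite eX1 mulmxN mulmxA.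
  rewrite -eX2 eX1 /G mulmxDl addrC; congr (_ + _).
  by rewrite mulNmx !mulmxN opprK !mulmxA.
rewrite mulmxN !mulmxA mulmxV // mul1mx addNr; congr col_mx.
by rewrite -GX2 /G mulmxDl addrC mulNmx mulmxN opprK !mulmxA.
Qed.

Lemma system_right_null_basis k (H : 'M[K]_(m, k)) :
  right_null_basis G H ->
  right_null_basis (block_mx A B (- C) D) (col_mx (- (invmx A *m B *m H)) H).
Proof.
have eT : forall l (X : 'M[K]_(m, l)), col_mx (- (invmx A *m B *m X)) X = T *m X.
  by move=> l X; rewrite mul_col_mx mul1mx mulNmx.
case=> GH rkH spanH; rewrite eT; split.
- by rewrite -eT; apply/mul_system_col_eq0.
- apply/eqP; rewrite eqn_leq rank_leq_col -[X in (X <= _)%N]rkH.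
  have {1}-> : H = row_mx 0 1%:M *m (T *m H).
    by rewrite mulmxA mul_row_col mul0mx add0r !mul1mx.
  exact: mxrankM_maxr.
- move=> x; rewrite -[x]vsubmxK => /mul_system_col_eq0[-> /spanH Gx2].
  by rewrite eT !trmx_mul submxMr.
Qed.

End SystemMatrix.

Section PolynomialMatrices.
Variable F : fieldType.
Local Notation K := {fraction {poly F}}.

Definition is_poly (x : K) : Prop := exists a : {poly F}, x = a%:F.
Definition is_pmx m n (M : 'M[K]_(m, n)) : Prop := exists M', M = pmx M'.

Lemma pmx_inj m n : injective (@pmx F m n).
Proof.
move=> M N /matrixP eMN; apply/matrixP => i j.
by have /eqP := eMN i j; rewrite !mxE tofrac_eq => /eqP.
Qed.

Lemma pmxM m n k (M : 'M[{poly F}]_(m, n)) (N : 'M[{poly F}]_(n, k)) :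
  pmx (M *m N) = pmx M *m pmx N.
Proof. exact: map_mxM. Qed.

Lemma pmx1 m : pmx (1%:M : 'M[{poly F}]_m) = 1%:M.
Proof. exact: map_mx1. Qed.

Lemma pmxN m n (M : 'M[{poly F}]_(m, n)) : pmx (- M) = - pmx M.
Proof. exact: map_mxN. Qed.

Lemma pmx_col_mx m1 m2 n (M1 : 'M[{poly F}]_(m1, n)) (M2 : 'M[{poly F}]_(m2, n)) :
  pmx (col_mx M1 M2) = col_mx (pmx M1) (pmx M2).
Proof. exact: map_col_mx. Qed.

Lemma pmx_block_mx m1 m2 n1 n2 (Ml : 'M[{poly F}]_(m1, n1)) (Mr : 'M[{poly F}]_(m1, n2))
    (Nl : 'M[{poly F}]_(m2, n1)) (Nr : 'M[{poly F}]_(m2, n2)) :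
  pmx (block_mx Ml Mr Nl Nr) = block_mx (pmx Ml) (pmx Mr) (pmx Nl) (pmx Nr).
Proof. exact: map_block_mx. Qed.

Lemma is_pmx_pmx m n (M : 'M[{poly F}]_(m, n)) : is_pmx (pmx M).
Proof. by exists M. Qed.
#[local] Hint Resolve is_pmx_pmx : core.

Lemma is_pmxD m n (X Y : 'M[K]_(m, n)) : is_pmx X -> is_pmx Y -> is_pmx (X + Y).
Proof. by move=> [X' ->] [Y' ->]; exists (X' + Y'); rewrite /pmx map_mxD. Qed.

Lemma is_pmxN m n (X : 'M[K]_(m, n)) : is_pmx X -> is_pmx (- X).
Proof. by move=> [X' ->]; exists (- X'); rewrite pmxN. Qed.

Lemma is_pmxM m n k (X : 'M[K]_(m, n)) (Y : 'M[K]_(n, k)) :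
  is_pmx X -> is_pmx Y -> is_pmx (X *m Y).
Proof. by move=> [X' ->] [Y' ->]; exists (X' *m Y'); rewrite pmxM. Qed.

Lemma is_pmxZ m n (a : {poly F}) (X : 'M[K]_(m, n)) : is_pmx X -> is_pmx (a%:F *: X).
Proof. by move=> [X' ->]; exists (a *: X'); rewrite /pmx map_mxZ. Qed.

Lemma is_pmx_delta m n i j : is_pmx (delta_mx i j : 'M[K]_(m, n)).
Proof. by exists (delta_mx i j); rewrite /pmx map_delta_mx. Qed.

Lemma is_pmx1 m : is_pmx (1%:M : 'M[K]_m).
Proof. by exists 1%:M; rewrite pmx1. Qed.

Lemma is_pmx_entry m n (M : 'M[K]_(m, n)) i j : is_pmx M -> is_poly (M i j).
Proof. by move=> [M' ->]; exists (M' i j); rewrite mxE. Qed.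

Lemma is_pmxP m n (M : 'M[K]_(m, n)) : (forall i j, is_poly (M i j)) -> is_pmx M.
Proof.
move=> polyM.
have /fin_all_exists[f ef] : forall ij : 'I_m * 'I_n, is_poly (M ij.1 ij.2) by [].
by exists (\matrix_(i, j) f (i, j)); apply/matrixP => i j; rewrite !mxE -ef.
Qed.

Lemma mx_common_denom m n (Y : 'M[K]_(m, n)) :
  exists2 q : {poly F}, q != 0 & is_pmx (q%:F *: Y).
Proof.
have /fin_all_exists[b /all_and2[b_neq0 polyYb]] :
    forall ij : 'I_m * 'I_n, exists b, b != 0 /\ is_poly (Y ij.1 ij.2 * b%:F).
  by move=> ij; have [b] := fraction_denom (Y ij.1 ij.2); exists b.
exists (\prod_ij b ij); first by apply/prodf_neq0 => ij _.
apply: is_pmxP => i j; have [a ea] := polyYb (i, j).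
exists (a * \prod_(ij | ij != (i, j)) b ij).
by rewrite mxE (bigD1 (i, j)) //= !tofracM mulrAC [_ * Y i j]mulrC ea.
Qed.

Section RightCoprime.
Variables (n p : nat) (A : 'M[{poly F}]_n) (C : 'M[{poly F}]_(p, n)).

Definition ACpoly k (Y : 'M[K]_(n, k)) : Prop :=
  is_pmx (pmx A *m Y) /\ is_pmx (pmx C *m Y).

Lemma is_pmx_ACpoly k (Y : 'M[K]_(n, k)) : is_pmx Y -> ACpoly Y.
Proof. by move=> polyY; split; apply: is_pmxM. Qed.

Lemma ACpolyD k (Y Z : 'M[K]_(n, k)) : ACpoly Y -> ACpoly Z -> ACpoly (Y + Z).
Proof. by move=> [AY CY] [AZ CZ]; split; rewrite mulmxDr; apply: is_pmxD. Qed.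

Lemma ACpolyN k (Y : 'M[K]_(n, k)) : ACpoly Y -> ACpoly (- Y).
Proof. by move=> [AY CY]; split; rewrite mulmxN; apply: is_pmxN. Qed.

Lemma ACpolyZ k (a : {poly F}) (Y : 'M[K]_(n, k)) : ACpoly Y -> ACpoly (a%:F *: Y).
Proof. by move=> [AY CY]; split; rewrite -scalemxAr; apply: is_pmxZ. Qed.

Lemma ACpolyMr k l (Y : 'M[K]_(n, k)) (M : 'M[K]_(k, l)) :
  ACpoly Y -> is_pmx M -> ACpoly (Y *m M).
Proof. by move=> [AY CY] polyM; split; rewrite mulmxA; apply: is_pmxM. Qed.

Lemma ACpoly_system_kernel m k (B : 'M[{poly F}]_(n, m)) (D : 'M[{poly F}]_(p, m))
    (Y : 'M[K]_(n, k)) (H : 'M[{poly F}]_(m, k)) :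
  pmx (block_mx A B (- C) D) *m col_mx Y (pmx H) = 0 -> ACpoly Y.
Proof.
rewrite pmx_block_mx pmxN mul_block_col -col_mx0 => /eq_col_mx[/eqP AY /eqP CY].
split; last by move: CY; rewrite mulNmx addrC subr_eq0 => /eqP <-; exact: is_pmxM.
by move: AY; rewrite addr_eq0 => /eqP ->; apply/is_pmxN/is_pmxM.
Qed.

Hypothesis coprimeAC : right_coprime A C.

Lemma ACpoly_right_inverse (S : 'M[K]_n) (R : 'M[{poly F}]_n) :
  S *m pmx R = 1%:M -> ACpoly S -> is_pmx S.
Proof.
move=> SR [[A' eA'] [C' eC']].
have divR l (X X' : 'M[{poly F}]_(l, n)) : pmx X *m S = pmx X' -> X = X' *m R.
  by move=> eX; apply: pmx_inj; rewrite pmxM -eX -mulmxA SR mulmx1.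
have unitR : unimodular R := coprimeAC (divR _ _ _ eA') (divR _ _ _ eC').
exists (invmx R).
by rewrite -[S]mulmx1 -pmx1 -(mulmxV unitR) pmxM mulmxA SR mul1mx.
Qed.

(* [S] is the identity with its [i]-th column replaced by [w]; its inverse [R]
   is polynomial because [r w] is. *)
Lemma ACpoly_unit_fraction (w : 'cV[K]_n) (r : {poly F}) (i : 'I_n) :
  ACpoly w -> is_pmx (r%:F *: w) -> w i 0 * r%:F = 1 -> (size r <= 1)%N.
Proof.
move=> polyw polyrw wr.
set u := w - delta_mx i 0; set E : 'rV[K]_n := delta_mx 0 i.
set S := 1%:M + u *m E; set R := 1%:M - (r%:F *: u) *m E.
have EX (v : 'cV[K]_n) : E *m v = (v i 0)%:M.
  by apply/matrixP => a b; rewrite -rowE (ord1 a) (ord1 b) !mxE eqxx mulr1n.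
have ur : r%:F * u i 0 = 1 - r%:F by rewrite !mxE eqxx mulrBr mulr1 mulrC wr.
have SR : S *m R = 1%:M.
  suff SuE : S *m ((r%:F *: u) *m E) = u *m E by rewrite mulmxBr mulmx1 SuE addrK.
  rewrite [S *m _]mulmxDl mul1mx -!mulmxA (mulmxA E) EX mxE ur.
  by rewrite mul_scalar_mx -scalemxAr -scalemxAl -scalerDl addrC subrK scale1r.
have polyR : is_pmx R.
  apply: is_pmxD; first exact: is_pmx1.
  apply/is_pmxN/is_pmxM; last exact: is_pmx_delta.
  by rewrite scalerBr; apply: is_pmxD => //; apply/is_pmxN/is_pmxZ/is_pmx_delta.
have [R' eR'] := polyR; rewrite eR' in SR.
have polyS : ACpoly S.
  apply: ACpolyD; first exact/is_pmx_ACpoly/is_pmx1.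
  apply: ACpolyMr; last exact: is_pmx_delta.
  by apply: ACpolyD => //; apply/ACpolyN/is_pmx_ACpoly/is_pmx_delta.
have [S' eS'] := ACpoly_right_inverse SR polyS.
have Sii : (S' i i)%:F = w i 0.
  move/matrixP: eS' => /(_ i i); rewrite !mxE => <-.
  by rewrite big_ord1 !mxE !eqxx mulr1 addrC subrK.
have Sr : S' i i * r = 1 by apply/eqP; rewrite -tofrac_eq tofracM Sii wr tofrac1.
have : r %| 1 by rewrite -Sr dvdp_mulIr.
by rewrite dvdp1 => /eqP ->.
Qed.

Lemma ACpoly_irreducible_denom (z : 'cV[K]_n) (r : {poly F}) :
  irreducible_poly r -> ACpoly z -> is_pmx (r%:F *: z) -> is_pmx z.
Proof.
move=> irr_r polyz [U eU]; apply: is_pmxP => i j; rewrite (ord1 j).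
have ezr : z i 0 * r%:F = (U i 0)%:F.
  by move/matrixP: eU => /(_ i 0); rewrite !mxE mulrC.
have rF_neq0 : r%:F != 0 by rewrite tofrac_eq0 irredp_neq0.
have [/dvdpP[c eUc]|r_ndvd] := boolP (r %| U i 0).
  by exists c; apply: (mulIf rF_neq0); rewrite ezr eUc tofracM.
have /Bezout_eq1_coprimepP[[a b] /= eab] : coprimep r (U i 0).
  by rewrite irreducible_poly_coprime.
set w := b%:F *: z + a%:F *: delta_mx i 0.
have polyw : ACpoly w.
  by apply: ACpolyD; apply: ACpolyZ => //; apply/is_pmx_ACpoly/is_pmx_delta.
have polyrw : is_pmx (r%:F *: w).
  rewrite scalerDr scalerA mulrC -scalerA eU.
  by apply: is_pmxD; apply: is_pmxZ => //; apply/is_pmxZ/is_pmx_delta.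
have wr : w i 0 * r%:F = 1.
  by rewrite !mxE !eqxx mulr1 mulrDl -mulrA ezr -!tofracM -tofracD addrC eab tofrac1.
by have := ACpoly_unit_fraction polyw polyrw wr; rewrite leqNgt irr_r.1.
Qed.

Lemma ACpoly_denom (q : {poly F}) (y : 'cV[K]_n) :
  q != 0 -> is_pmx (q%:F *: y) -> ACpoly y -> is_pmx y.
Proof.
elim: {q}(size q).+1 {-2}q (ltnSn (size q)) => [//|N IH] q ltqN q_neq0 polyqy polyy.
have [small|big] := leqP (size q) 1.
  have q0_neq0 : q`_0 != 0 by apply: contraNneq q_neq0 => q00; rewrite (size1_polyC small) q00.
  have -> : y = ((q`_0)^-1%:P)%:F *: (q%:F *: y).
    by rewrite scalerA -tofracM {2}(size1_polyC small) -polyCM mulVf // scale1r.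
  exact: is_pmxZ.
have [r rq irr_r] := irreducible_factor big.
have eq_q : q = q %/ r * r by rewrite divpK.
have q'_neq0 : q %/ r != 0 by apply: contraNneq q_neq0 => q'0; rewrite eq_q q'0 mul0r.
apply: (IH (q %/ r)) => //.
  rewrite size_divp ?irredp_neq0 //; rewrite ltnS in ltqN; apply: leq_trans ltqN.
  by rewrite ltn_subrL -subn1 subn_gt0 irr_r.1 (ltn_trans _ big).
apply: ACpoly_irreducible_denom irr_r (ACpolyZ _ polyy) _.
by rewrite scalerA -tofracM mulrC -eq_q.
Qed.

Lemma ACpoly_is_pmx k (Y : 'M[K]_(n, k)) : ACpoly Y -> is_pmx Y.
Proof.
move=> polyY; apply: is_pmxP => i j.
have polyYj : ACpoly (col j Y) by rewrite colE; apply: ACpolyMr polyY (is_pmx_delta _ _).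
have [q q_neq0 polyqYj] := mx_common_denom (col j Y).
by have := is_pmx_entry i 0 (ACpoly_denom q_neq0 polyqYj polyYj); rewrite mxE.
Qed.

End RightCoprime.
End PolynomialMatrices.

Theorem lemma3p7 (F : fieldType) (n m p k : nat)
  (A : 'M[{poly F}]_n) (B : 'M[{poly F}]_(n, m))
  (C : 'M[{poly F}]_(p, n)) (D : 'M[{poly F}]_(p, m))
  (G : 'M[ratf F]_(p, m)) (H2 : 'M[{poly F}]_(m, k)) :
  \det A != 0 ->
  G = pmx D + pmx C *m invmx (pmx A) *m pmx B ->
  right_coprime A C ->
  right_poly_basis G H2 ->
  exists H1 : 'M[{poly F}]_(n, k),
    pmx H1 = - (invmx (pmx A) *m pmx B *m pmx H2) /\
    right_poly_basis (pmx (block_mx A B (- C) D)) (col_mx H1 H2).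
Proof.
move=> detA eG coprimeAC basisH2.
have unitA : pmx A \in unitmx by rewrite unitmxE /pmx det_map_mx unitfE tofrac_eq0.
rewrite eG in basisH2.
have := system_right_null_basis unitA basisH2.
rewrite -pmxN -pmx_block_mx => basisP.
have [kerP _ _] := basisP.
have [H1 eH1] := ACpoly_is_pmx coprimeAC (ACpoly_system_kernel kerP).
by exists H1; split; rewrite // /right_poly_basis pmx_col_mx -eH1.
Qed.
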